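(* Let $(\mathcal E,S,\Theta_A(\mathcal E))$ and $(\mathcal F,T,\Theta_A(\mathcal F))$ be right functional $A$-modules and $(X,f)$ a functional module homomorphism between them with $X$ surjective. Then $(X,f)$ induces a ring homomorphism $\sigma\colon\mathcal K_A(\mathcal E)\to\mathcal K_A(\mathcal F)$, and $f$ is injective. If $(X,f)$ is an isomorphism (i.e. $X$ and $f$ are bijective), then $\sigma$ is an isomorphism and extends to an isomorphism $\mathcal L_A(\mathcal E)\to\mathcal L_A(\mathcal F)$.
   Context: $G$ is a discrete group; $(A,\alpha)$ is an associative ring (not necessarily commutative or unital) with $G$-action. A right functional $A$-module is a right $A$-module $\mathcal E$ with a $G$-action $S$ by additive bijections with $S_g(\xi a)=S_g(\xi)\alpha_g(a)$, together with a functional space $\Theta_A(\mathcal E)\subseteq\mathrm{Hom}_A(\mathcal E,A)$ which is a left $A$-submodule ($(a\varphi)(\xi)=a\varphi(\xi)$) invariant under $\varphi\mapsto\alpha_g\circ\varphi\circ S_{g^{-1}}$. The compact operators $\mathcal K_A(\mathcal E)$ are the finite sums of $\theta_{\eta,\varphi}(\xi)=\eta\varphi(\xi)$ ($\eta\in\mathcal E$, $\varphi\in\Theta_A(\mathcal E)$); the adjointable operators $\mathcal L_A(\mathcal E)$ are the $V\in\mathrm{Hom}_A(\mathcal E,\mathcal E)$ with $\varphi\circ V\in\Theta_A(\mathcal E)$ for all $\varphi\in\Theta_A(\mathcal E)$. A functional module homomorphism $(X,f)$ from $\mathcal E$ to $\mathcal F$ consists of a $G$-equivariant right $A$-module homomorphism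 $X\colon\mathcal E\to\mathcal F$ and a $G$-equivariant left $A$-module homomorphism $f\colon\Theta_A(\mathcal E)\to\Theta_A(\mathcal F)$ such that $f(\varphi)(X(\xi))=\varphi(\xi)$ for all $\varphi\in\Theta_A(\mathcal E)$, $\xi\in\mathcal E$. *)

From HB Require Import structures.
From mathcomp Require Import all_boot all_algebra.
Set Implicit Arguments.
Unset Strict Implicit.
Unset Printing Implicit Defensive.
Import GRing.Theory.
Local Open Scope ring_scope.

(* A : an associative, not necessarily unital nor commutative ring, given as
   an additive group [A : zmodType] together with a multiplication [mulA]
   satisfying [nonunital_ring_axioms]. *)

Section Defs.
Variable G : groupType.
Variable A : zmodType.
Variable mulA : A -> A -> A.

Definition nonunital_ring_axioms : Prop :=
  [/\ associative mulA,
      left_distributive mulA +%R & right_distributive mulA +%R].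

Definition ring_action (alpha : G -> A -> A) : Prop :=
  [/\ forall g x y, alpha g (x + y) = alpha g x + alpha g y,
      forall g x y, alpha g (mulA x y) = mulA (alpha g x) (alpha g y),
      forall g, bijective (alpha g),
      forall x, alpha 1%g x = x
    & forall g h x, alpha (g * h)%g x = alpha g (alpha h x)].

Variable alpha : G -> A -> A.

Section Module.
Variable E : zmodType.
Variable ract : E -> A -> E.

Definition right_module : Prop :=
  [/\ forall xi eta a, ract (xi + eta) a = ract xi a + ract eta a,
      forall xi a b, ract xi (a + b) = ract xi a + ract xi b
    & forall xi a b, ract xi (mulA a b) = ract (ract xi a) b].

Definition module_action (S : G -> E -> E) : Prop :=
  [/\ forall g xi eta, S g (xi + eta) = S g xi + S g eta,
      forall g, bijective (S g),
      forall xi, S 1%g xi = xi,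
      forall g h xi, S (g * h)%g xi = S g (S h xi)
    & forall g xi a, S g (ract xi a) = ract (S g xi) (alpha g a)].

Definition is_hom_to_A (phi : E -> A) : Prop :=
  (forall xi eta, phi (xi + eta) = phi xi + phi eta) /\
  (forall xi a, phi (ract xi a) = mulA (phi xi) a).

Definition functional_space (S : G -> E -> E) (Theta : (E -> A) -> Prop) : Prop :=
  [/\ forall phi, Theta phi -> is_hom_to_A phi,
      Theta (fun _ => 0),
      forall phi psi, Theta phi -> Theta psi -> Theta (fun xi => phi xi - psi xi),
      forall a phi, Theta phi -> Theta (fun xi => mulA a (phi xi))
    & forall g phi, Theta phi -> Theta (fun xi => alpha g (phi (S g^-1%g xi)))].

Definition functional_module (S : G -> E -> E) (Theta : (E -> A) -> Prop) : Prop :=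
  [/\ right_module, module_action S & functional_space S Theta].

Definition theta_op (eta : E) (phi : E -> A) : E -> E :=
  fun xi => ract eta (phi xi).

Definition compact_op (Theta : (E -> A) -> Prop) (K : E -> E) : Prop :=
  exists (n : nat) (eta : 'I_n -> E) (phi : 'I_n -> E -> A),
    (forall i, Theta (phi i)) /\
    (forall xi, K xi = \sum_(i < n) theta_op (eta i) (phi i) xi).

Definition adjointable_op (Theta : (E -> A) -> Prop) (V : E -> E) : Prop :=
  [/\ forall xi eta, V (xi + eta) = V xi + V eta,
      forall xi a, V (ract xi a) = ract (V xi) a
    & forall phi, Theta phi -> Theta (fun xi => phi (V xi))].

End Module.

Definition op_add (E : zmodType) (K1 K2 : E -> E) : E -> E :=
  fun xi => K1 xi + K2 xi.

(* A functional module homomorphism (X, f).  f is given as a function on all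
   of E -> A, only its values on Theta_A(E) matter. *)
Definition functional_module_hom (E F : zmodType)
    (ractE : E -> A -> E) (S : G -> E -> E) (ThetaE : (E -> A) -> Prop)
    (ractF : F -> A -> F) (T : G -> F -> F) (ThetaF : (F -> A) -> Prop)
    (X : E -> F) (f : (E -> A) -> (F -> A)) : Prop :=
  [/\
      (forall xi eta, X (xi + eta) = X xi + X eta)
      /\ (forall xi a, X (ractE xi a) = ractF (X xi) a)
      /\ (forall g xi, X (S g xi) = T g (X xi)),
      forall phi, ThetaE phi -> ThetaF (f phi),
      (forall phi psi, ThetaE phi -> ThetaE psi ->
          f (fun xi => phi xi + psi xi) = (fun z => f phi z + f psi z))
      /\ (forall a phi, ThetaE phi ->
          f (fun xi => mulA a (phi xi)) = (fun z => mulA a (f phi z)))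
      /\ (forall g phi, ThetaE phi ->
          f (fun xi => alpha g (phi (S g^-1%g xi)))
          = (fun z => alpha g (f phi (T g^-1%g z))))
    & forall phi xi, ThetaE phi -> f phi (X xi) = phi xi].

End Defs.

From mathcomp Require Import all_boot all_algebra.
From Stdlib Require Import ClassicalEpsilon FunctionalExtensionality.
Set Implicit Arguments.
Unset Strict Implicit.
Unset Printing Implicit Defensive.
Import GRing.Theory.
Local Open Scope ring_scope.

(* Since phi = f(phi) o X, a compact operator K = sum_i theta_{eta_i, phi_i}
   on E satisfies X o K = K' o X for the compact operator
   K' = sum_i theta_{X eta_i, f phi_i} on F.  When X is onto, K' = X o K o s
   for any section s of X, so sigma K := X o K o s is compact, additive and
   multiplicative on K_A(E).  When (X, f) is an isomorphism, (X^-1, f^-1) is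
   again a functional module homomorphism, and conjugation by X is a ring
   isomorphism L_A(E) -> L_A(F) with inverse conjugation by X^-1. *)

Lemma additive_sum (U V : zmodType) (h : U -> V) :
  {morph h : x y / x + y} ->
  forall n (u : 'I_n -> U), h (\sum_(i < n) u i) = \sum_(i < n) h (u i).
Proof.
move=> hD n u; apply: big_morph => //.
by apply: (addrI (h 0)); rewrite -hD !addr0.
Qed.

Section ModuleMaps.
Variable A : zmodType.

Definition module_hom (E F : zmodType) (ractE : E -> A -> E) (ractF : F -> A -> F)
    (X : E -> F) : Prop :=
  {morph X : xi eta / xi + eta} /\ forall xi a, X (ractE xi a) = ractF (X xi) a.

Lemma module_hom_can (E F : zmodType) (ractE : E -> A -> E) (ractF : F -> A -> F)
    (X : E -> F) (s : F -> E) :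
  module_hom ractE ractF X -> cancel X s -> cancel s X -> module_hom ractF ractE s.
Proof.
move=> [XD Xr] Xs sX; split=> [z1 z2 | z a]; apply: (can_inj Xs).
  by rewrite XD !sX.
by rewrite Xr !sX.
Qed.

Definition factors_functionals (E F : zmodType) (X : E -> F)
    (ThetaE : (E -> A) -> Prop) (ThetaF : (F -> A) -> Prop) : Prop :=
  forall phi, ThetaE phi -> exists2 psi, ThetaF psi & forall xi, psi (X xi) = phi xi.

End ModuleMaps.

Section Conjugation.
Variables (E F : Type) (X : E -> F) (s : F -> E).

Definition conj_op (V : E -> E) : F -> F := X \o V \o s.

Hypothesis Xs : cancel s X.

Lemma conj_op_intertwined (V : E -> E) (V' : F -> F) :
  (forall xi, X (V xi) = V' (X xi)) -> conj_op V = V'.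
Proof. by move=> XV; apply: functional_extensionality => z; rewrite /conj_op /= XV Xs. Qed.

Lemma conj_op_comp (V1 V2 : E -> E) (V1' : F -> F) :
  (forall xi, X (V1 xi) = V1' (X xi)) ->
  conj_op (V1 \o V2) = conj_op V1 \o conj_op V2.
Proof.
move=> XV1; rewrite (conj_op_intertwined XV1).
by apply: functional_extensionality => z; rewrite /conj_op /= XV1.
Qed.

Hypothesis sX : cancel X s.

Lemma conj_opX (V : E -> E) xi : X (V xi) = conj_op V (X xi).
Proof. by rewrite /conj_op /= sX. Qed.

Lemma conj_op_inj : injective conj_op.
Proof.
move=> V1 V2 eqV; apply: functional_extensionality => xi.
by apply: (can_inj sX); rewrite !conj_opX eqV.
Qed.

End Conjugation.

Lemma conj_op_add (E F : zmodType) (X : E -> F) (s : F -> E) (V1 V2 : E -> E) :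
  {morph X : xi eta / xi + eta} ->
  conj_op X s (op_add V1 V2) = op_add (conj_op X s V1) (conj_op X s V2).
Proof. by move=> XD; apply: functional_extensionality => z; rewrite /conj_op /= XD. Qed.

Lemma conj_opK (E F : Type) (X : E -> F) (s : F -> E) :
  cancel X s -> cancel s X -> cancel (conj_op s X) (conj_op X s).
Proof.
move=> sX Xs V'; apply: conj_op_intertwined => // z.
by rewrite /= Xs.
Qed.

Section Transport.
Variables (A : zmodType) (E F : zmodType).
Variables (ractE : E -> A -> E) (ThetaE : (E -> A) -> Prop).
Variables (ractF : F -> A -> F) (ThetaF : (F -> A) -> Prop).
Variable X : E -> F.
Hypotheses (Xhom : module_hom ractE ractF X)
  (Xfactors : factors_functionals X ThetaE ThetaF).

Lemma compact_op_intertwine (K : E -> E) :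
  compact_op ractE ThetaE K ->
  exists2 K', compact_op ractF ThetaF K' & forall xi, X (K xi) = K' (X xi).
Proof.
case: Xhom => XD Xr [n [eta [phi [Hphi HK]]]].
have /choice [psi Hpsi] :
    forall i, exists psi, ThetaF psi /\ forall xi, psi (X xi) = phi i xi.
  by move=> i; have [psi ? ?] := Xfactors (Hphi i); exists psi.
exists (fun z => \sum_(i < n) theta_op ractF (X (eta i)) (psi i) z).
  by exists n, (X \o eta), psi; split=> // i; case: (Hpsi i).
move=> xi; rewrite HK additive_sum //; apply: eq_bigr => i _.
by rewrite /theta_op Xr (proj2 (Hpsi i)).
Qed.

Lemma compact_op_conj (s : F -> E) (K : E -> E) :
  cancel s X -> compact_op ractE ThetaE K -> compact_op ractF ThetaF (conj_op X s K).
Proof.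
move=> Xs /compact_op_intertwine [K' HK' XK].
by rewrite (conj_op_intertwined Xs XK).
Qed.

Lemma adjointable_op_conj (s : F -> E) (V : E -> E) :
  module_hom ractF ractE s -> cancel X s -> cancel s X ->
  factors_functionals s ThetaF ThetaE ->
  adjointable_op ractE ThetaE V -> adjointable_op ractF ThetaF (conj_op X s V).
Proof.
case: Xhom => XD Xr [sD sr] sX Xs sfactors [VD Vr VTheta].
split=> [z1 z2 | z a | psi Hpsi]; rewrite /conj_op /= ?sD ?VD ?XD ?sr ?Vr ?Xr //.
have [phi Hphi psiE] := sfactors _ Hpsi.
have psiX xi : psi (X xi) = phi xi by rewrite -psiE sX.
have [psi' Hpsi' psi'E] := Xfactors (VTheta _ Hphi).
suff -> : (fun z => psi (X (V (s z)))) = psi' by [].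
by apply: functional_extensionality => z; rewrite psiX -psi'E Xs.
Qed.

End Transport.

Lemma compatible_functional_inj (A E F : zmodType) (ThetaE : (E -> A) -> Prop)
    (X : E -> F) (f : (E -> A) -> F -> A) :
  (forall phi xi, ThetaE phi -> f phi (X xi) = phi xi) ->
  forall phi psi, ThetaE phi -> ThetaE psi -> f phi = f psi -> phi = psi.
Proof.
move=> fX phi psi Hphi Hpsi eqf; apply: functional_extensionality => xi.
by rewrite -(fX _ _ Hphi) -(fX _ _ Hpsi) eqf.
Qed.

Theorem lemma2p8 (G : groupType) (A : zmodType) (mulA : A -> A -> A)
  (alpha : G -> A -> A)
  (E F : zmodType)
  (ractE : E -> A -> E) (S : G -> E -> E) (ThetaE : (E -> A) -> Prop)
  (ractF : F -> A -> F) (T : G -> F -> F) (ThetaF : (F -> A) -> Prop)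
  (X : E -> F) (f : (E -> A) -> (F -> A)) :
  nonunital_ring_axioms mulA ->
  ring_action mulA alpha ->
  functional_module mulA alpha ractE S ThetaE ->
  functional_module mulA alpha ractF T ThetaF ->
  functional_module_hom mulA alpha ractE S ThetaE ractF T ThetaF X f ->
  (forall z : F, exists xi : E, X xi = z) ->
  exists sigma : (E -> E) -> (F -> F),
    (* sigma : K_A(E) -> K_A(F) is a ring homomorphism ... *)
    [/\ forall K, compact_op ractE ThetaE K -> compact_op ractF ThetaF (sigma K),
        forall K1 K2, compact_op ractE ThetaE K1 -> compact_op ractE ThetaE K2 ->
          sigma (op_add K1 K2) = op_add (sigma K1) (sigma K2),
        forall K1 K2, compact_op ractE ThetaE K1 -> compact_op ractE ThetaE K2 ->
          sigma (K1 \o K2) = sigma K1 \o sigma K2,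
    (* ... induced by (X, f) *)
        forall eta phi, ThetaE phi ->
          sigma (theta_op ractE eta phi) = theta_op ractF (X eta) (f phi)
    &
    (* f is injective (on Theta_A(E)) *)
    (forall phi psi, ThetaE phi -> ThetaE psi -> f phi = f psi -> phi = psi)
    /\
    (* if (X, f) is an isomorphism ... *)
    (bijective X ->
     (forall psi, ThetaF psi -> exists2 phi, ThetaE phi & f phi = psi) ->
       (* ... sigma is an isomorphism K_A(E) -> K_A(F) ... *)
       ((forall K1 K2, compact_op ractE ThetaE K1 -> compact_op ractE ThetaE K2 ->
           sigma K1 = sigma K2 -> K1 = K2)
        /\ (forall K', compact_op ractF ThetaF K' ->
              exists2 K, compact_op ractE ThetaE K & sigma K = K'))
       /\
       (* ... which extends to a ring isomorphism L_A(E) -> L_A(F) *)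
       (exists tau : (E -> E) -> (F -> F),
         [/\ forall V, adjointable_op ractE ThetaE V ->
               adjointable_op ractF ThetaF (tau V),
             forall V1 V2, adjointable_op ractE ThetaE V1 ->
               adjointable_op ractE ThetaE V2 ->
               tau (op_add V1 V2) = op_add (tau V1) (tau V2),
             forall V1 V2, adjointable_op ractE ThetaE V1 ->
               adjointable_op ractE ThetaE V2 ->
               tau (V1 \o V2) = tau V1 \o tau V2,
             (forall V1 V2, adjointable_op ractE ThetaE V1 ->
               adjointable_op ractE ThetaE V2 -> tau V1 = tau V2 -> V1 = V2)
             /\ (forall V', adjointable_op ractF ThetaF V' ->
               exists2 V, adjointable_op ractE ThetaE V & tau V = V')
           & forall K, compact_op ractE ThetaE K -> tau K = sigma K]))].
Proof.
move=> _ _ _ _ [[XD [Xr _]] fTheta _ fX] Xsurj.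
have Xhom : module_hom ractE ractF X by [].
have Xfactors : factors_functionals X ThetaE ThetaF.
  by move=> phi Hphi; exists (f phi) => [|xi]; [apply: fTheta | apply: fX].
have [s Xs] : exists s : F -> E, cancel s X.
  exact: choice (fun z xi => X xi = z) Xsurj.
exists (conj_op X s); split.
- by move=> K; apply: compact_op_conj.
- by move=> K1 K2 _ _; apply: conj_op_add.
- move=> K1 K2 /(compact_op_intertwine Xhom Xfactors) [K1' _ XK1] _.
  exact: conj_op_comp XK1.
- move=> eta phi Hphi; apply: conj_op_intertwined => // xi.
  by rewrite /theta_op Xr fX.
split; first exact: compatible_functional_inj fX.
move=> Xbij fsurj; have sX : cancel X s by apply/(bij_can_sym Xbij).
have shom := module_hom_can Xhom sX Xs.
have sfactors : factors_functionals s ThetaF ThetaE.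
  by move=> psi /fsurj [phi Hphi <-]; exists phi => // z; rewrite -[in RHS](Xs z) fX.
split; first split.
- by move=> K1 K2 _ _; apply: conj_op_inj.
- move=> K' HK'; exists (conj_op s X K'); last exact: conj_opK.
  exact (compact_op_conj shom sfactors sX HK').
exists (conj_op X s); split=> //.
- by move=> V; apply: adjointable_op_conj.
- by move=> V1 V2 _ _; apply: conj_op_add.
- by move=> V1 V2 _ _; apply: conj_op_comp (conj_opX sX V1).
- split=> [V1 V2 _ _ | V' HV']; first exact: conj_op_inj.
  exists (conj_op s X V'); last exact: conj_opK.
  exact (adjointable_op_conj shom sfactors Xhom Xs sX Xfactors HV').
Qed.
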